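(* Let $m,n$ be integers with $|m|=|n|\ge2$. Then $\mathrm{BS}(m,n)$ has no primitive transitive action of infinite phenotype.
   Context: $\mathrm{BS}(m,n)=\langle b,t\mid tb^mt^{-1}=b^n\rangle$; right actions. A transitive action with point stabilizer $\Lambda$ has infinite phenotype iff $[\langle b\rangle:\langle b\rangle\cap\Lambda]=\infty$, i.e. iff $b$ acts freely (all $b$-orbits are infinite). An action is primitive if it preserves no equivalence relation other than equality and the full relation. *)

(* An action of BS(m,n) = <b,t | t b^m t^-1 = b^n> on a type X
   is given by the bijections x |-> x.b and x |-> x.t (right action), with
   explicit inverses. *)
From Stdlib Require Import ZArith Relations.
Open Scope Z_scope.

Definition zpow {X : Type} (f finv : X -> X) (k : Z) : X -> X :=
  if (0 <=? k)%Z then Nat.iter (Z.to_nat k) f else Nat.iter (Z.to_nat (- k)) finv.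

Definition BS_action (m n : Z) (X : Type) (b bi t ti : X -> X) : Prop :=
  (forall x, bi (b x) = x) /\ (forall x, b (bi x) = x) /\
  (forall x, ti (t x) = x) /\ (forall x, t (ti x) = x) /\
  (* right action: x.(t b^m t^-1) = x.b^n *)
  (forall x, ti (zpow b bi m (t x)) = zpow b bi n x).

Definition gen_step {X : Type} (b bi t ti : X -> X) (x y : X) : Prop :=
  y = b x \/ y = bi x \/ y = t x \/ y = ti x.

Definition transitive_action {X : Type} (b bi t ti : X -> X) : Prop :=
  inhabited X /\
  forall x y : X, clos_refl_trans X (gen_step b bi t ti) x y.

Definition primitive_action {X : Type} (b bi t ti : X -> X) : Prop :=
  forall R : X -> X -> Prop,
    equivalence X R ->
    (forall x y, R x y -> R (b x) (b y) /\ R (bi x) (bi y)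
                         /\ R (t x) (t y) /\ R (ti x) (ti y)) ->
    (forall x y, R x y -> x = y) \/ (forall x y, R x y).

(* infinite phenotype: b acts freely, i.e. all b-orbits are infinite *)
Definition infinite_phenotype {X : Type} (b : X -> X) : Prop :=
  forall (x : X) (k : nat), (0 < k)%nat -> Nat.iter k b x <> x.

(* Let K = |m| = |n|. Since t conjugates b^m to b^n and b^(+-K) generate the
   same cyclic group, the partition of X into orbits of <b^K> is invariant
   under the whole group. By primitivity it is trivial or total. It is not
   trivial, because x and x.b^K are distinct when b acts freely; it is not
   total, because x.b^(iK) = x.b^(jK+1) would force iK = jK + 1, impossible
   for K >= 2. Transitivity is only needed to make X nonempty. *)
From Stdlib Require Import ZArith Relations Lia.
Open Scope Z_scope.

Section Iteration.

Context {X : Type}.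

Lemma iter_mul (f : X -> X) (i k : nat) (x : X) :
  Nat.iter i (Nat.iter k f) x = Nat.iter (i * k) f x.
Proof.
  induction i as [|i IH]; simpl; [reflexivity|].
  now rewrite Nat.iter_add, IH.
Qed.

Lemma iter_cancel (f g : X -> X) (gf : forall x, g (f x) = x) (i : nat) (x : X) :
  Nat.iter i g (Nat.iter i f x) = x.
Proof.
  induction i as [|i IH]; [reflexivity|].
  now rewrite Nat.iter_succ_r, Nat.iter_succ, gf.
Qed.

Lemma iter_free_inj (f : X -> X)
    (free : forall x k, (0 < k)%nat -> Nat.iter k f x <> x) (p q : nat) (x : X) :
  Nat.iter p f x = Nat.iter q f x -> p = q.
Proof.
  assert (lt : forall p q, (p < q)%nat -> Nat.iter p f x <> Nat.iter q f x).
  { intros p' q' Hpq E. apply (free (Nat.iter p' f x) (q' - p')%nat); [lia|].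
    rewrite <- Nat.iter_add, Nat.sub_add by lia. now symmetry. }
  intros E. destruct (Nat.lt_trichotomy p q) as [H|[H|H]]; [|exact H|].
  - now destruct (lt p q H).
  - now destruct (lt q p H).
Qed.

Definition same_orbit (f : X -> X) (x y : X) : Prop :=
  exists i j : nat, Nat.iter i f x = Nat.iter j f y.

Lemma same_orbit_equivalence (f : X -> X) : equivalence X (same_orbit f).
Proof.
  split.
  - intros x. now exists 0%nat, 0%nat.
  - intros x y z [i [j E]] [i' [j' E']]. exists (i' + i)%nat, (j + j')%nat.
    rewrite Nat.iter_add, E, <- Nat.iter_add, Nat.add_comm, Nat.iter_add, E'.
    now rewrite <- Nat.iter_add.
  - intros x y [i [j E]]. now exists j, i.
Qed.

Lemma same_orbit_inv (f g : X -> X) (gf : forall x, g (f x) = x) (x y : X) :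
  same_orbit f x y -> same_orbit g x y.
Proof.
  intros [i [j E]]. exists j, i.
  apply (f_equal (Nat.iter (j + i) g)) in E.
  rewrite Nat.iter_add, iter_cancel in E by exact gf.
  now rewrite Nat.add_comm, Nat.iter_add, iter_cancel in E by exact gf.
Qed.

Lemma same_orbit_conj (h f g : X -> X) (hf : forall x, h (f x) = g (h x)) (x y : X) :
  same_orbit f x y -> same_orbit g (h x) (h y).
Proof.
  intros [i [j E]]. exists i, j.
  now rewrite <- !(Nat.iter_swap_gen _ _ h f g hf), E.
Qed.

Lemma same_orbit_iter_comm (h f : X -> X) (hf : forall x, h (f x) = f (h x))
    (k : nat) (x y : X) :
  same_orbit (Nat.iter k f) x y -> same_orbit (Nat.iter k f) (h x) (h y).
Proof. apply same_orbit_conj, Nat.iter_swap_gen, hf. Qed.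

End Iteration.

Section FreeAction.

Context {X : Type} (b : X -> X).
Hypothesis free : forall x k, (0 < k)%nat -> Nat.iter k b x <> x.

Lemma same_orbit_iter_not_discrete (k : nat) :
  (0 < k)%nat -> X -> ~ (forall x y, same_orbit (Nat.iter k b) x y -> x = y).
Proof.
  intros Hk x discrete. apply (free x k Hk), eq_sym, discrete.
  now exists 1%nat, 0%nat.
Qed.

Lemma same_orbit_iter_not_total (k : nat) :
  (2 <= k)%nat -> X -> ~ (forall x y, same_orbit (Nat.iter k b) x y).
Proof.
  intros Hk x total. destruct (total x (b x)) as [i [j E]].
  rewrite !iter_mul, <- Nat.iter_succ_r in E.
  apply iter_free_inj in E; [|exact free].
  destruct (Nat.le_gt_cases i j); nia.
Qed.

End FreeAction.

Section BSAction.

Context {X : Type} (b bi : X -> X).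
Hypotheses (bib : forall x, bi (b x) = x) (bbi : forall x, b (bi x) = x).

Lemma same_orbit_zpow (z : Z) (x y : X) :
  same_orbit (zpow b bi z) x y <-> same_orbit (Nat.iter (Z.to_nat (Z.abs z)) b) x y.
Proof.
  unfold zpow. destruct (0 <=? z) eqn:Hz.
  - now rewrite Z.abs_eq by (apply Z.leb_le; exact Hz).
  - apply Z.leb_gt in Hz. rewrite Z.abs_neq by lia.
    split; apply same_orbit_inv; intros w; now apply iter_cancel.
Qed.

Lemma same_orbit_zpow_conj (h : X -> X) (z z' : Z)
    (hz : forall x, h (zpow b bi z x) = zpow b bi z' (h x))
    (habs : Z.abs z = Z.abs z') (x y : X) :
  same_orbit (Nat.iter (Z.to_nat (Z.abs z)) b) x y ->
  same_orbit (Nat.iter (Z.to_nat (Z.abs z)) b) (h x) (h y).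
Proof.
  intros H. rewrite habs. apply same_orbit_zpow, (same_orbit_conj h _ _ hz).
  now apply same_orbit_zpow.
Qed.

Lemma BS_same_orbit_invariant (m n : Z) (t ti : X -> X)
    (hact : BS_action m n X b bi t ti) (hmn : Z.abs m = Z.abs n) (x y : X) :
  let R := same_orbit (Nat.iter (Z.to_nat (Z.abs m)) b) in
  R x y -> R (b x) (b y) /\ R (bi x) (bi y) /\ R (t x) (t y) /\ R (ti x) (ti y).
Proof.
  destruct hact as (_ & _ & _ & tti & rel). intros R H.
  assert (t_conj : forall w, t (zpow b bi n w) = zpow b bi m (t w))
    by (intros w; now rewrite <- rel, tti).
  assert (ti_conj : forall w, ti (zpow b bi m w) = zpow b bi n (ti w))
    by (intros w; now rewrite <- rel, tti).
  repeat split.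
  - now apply same_orbit_iter_comm.
  - apply same_orbit_iter_comm; [|exact H].
    intros w. now rewrite bib, bbi.
  - unfold R in H |- *. rewrite hmn in H |- *.
    exact (same_orbit_zpow_conj t n m t_conj (eq_sym hmn) x y H).
  - exact (same_orbit_zpow_conj ti m n ti_conj hmn x y H).
Qed.

End BSAction.

Theorem mainTheorem16 (m n : Z) (hmn : Z.abs m = Z.abs n) (h2 : 2 <= Z.abs m)
  (X : Type) (b bi t ti : X -> X) (hact : BS_action m n X b bi t ti) :
  ~ (transitive_action b bi t ti /\ primitive_action b bi t ti
     /\ infinite_phenotype b).
Proof.
  intros [[[x0] _] [primitive free]].
  pose proof hact as (bib & bbi & _).
  set (K := Z.to_nat (Z.abs m)).
  destruct (primitive (same_orbit (Nat.iter K b)) (same_orbit_equivalence _)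
              (BS_same_orbit_invariant b bi bib bbi m n t ti hact hmn))
    as [discrete | total].
  - exact (same_orbit_iter_not_discrete b free K ltac:(lia) x0 discrete).
  - exact (same_orbit_iter_not_total b free K ltac:(lia) x0 total).
Qed.
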